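(* Every bipartite graph is strongly EFX-orientable.
   Context: All graphs are finite and simple. For a graph $G=(V,E)$ and $v\in V$, $E(v)$ is the set of edges incident to $v$. A graphical instance on $G$ assigns to each vertex $v$ a valuation $f_v:2^E\to\mathbb{R}_{\ge 0}$ that is monotone ($A\subseteq B\Rightarrow f_v(A)\le f_v(B)$) and satisfies $f_v(X)=f_v(X\cap E(v))$ for all $X\subseteq E$. An orientation of $G$ chooses for each edge one of its endpoints as its head; vertex $v$ receives the bundle $X_v$ of edges whose head is $v$. The orientation is EFX if for all $u,v\in V$ and every $g\in X_v$, $f_u(X_u)\ge f_u(X_v\setminus\{g\})$. A graph $G$ is strongly EFX-orientable if for every graphical instance on $G$ there exists an EFX orientation. *)

From mathcomp Require Import all_boot all_order all_algebra.
From mathcomp Require Import reals.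
Set Implicit Arguments. Unset Strict Implicit. Unset Printing Implicit Defensive.
Import Order.TTheory GRing.Theory Num.Theory.
Local Open Scope ring_scope.

Definition simple_graph (V : finType) (adj : rel V) : Prop :=
  symmetric adj /\ irreflexive adj.

Definition is_edge (V : finType) (adj : rel V) (s : {set V}) : bool :=
  [exists u, exists v, adj u v && (s == [set u; v])].

Definition edge (V : finType) (adj : rel V) : finType :=
  {s : {set V} | is_edge adj s}.

Definition inc_edges (V : finType) (adj : rel V) (v : V) : {set edge adj} :=
  [set g : edge adj | v \in val g].

Definition graphical_instance (R : realType) (V : finType) (adj : rel V)
  (f : V -> {set edge adj} -> R) : Prop :=
  (forall v X, 0 <= f v X) /\
  (forall v (A B : {set edge adj}), A \subset B -> f v A <= f v B) /\
  (forall v X, f v X = f v (X :&: inc_edges adj v)).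

Definition orientation (V : finType) (adj : rel V) (h : edge adj -> V) : Prop :=
  forall g : edge adj, h g \in val g.

Definition bundle (V : finType) (adj : rel V) (h : edge adj -> V) (v : V)
  : {set edge adj} := [set g | h g == v].

Definition EFX (R : realType) (V : finType) (adj : rel V)
  (f : V -> {set edge adj} -> R) (h : edge adj -> V) : Prop :=
  forall u v : V, forall g, g \in bundle h v ->
    f u (bundle h v :\ g) <= f u (bundle h u).

Definition strongly_EFX_orientable (V : finType) (adj : rel V) : Prop :=
  forall (R : realType) (f : V -> {set edge adj} -> R),
    graphical_instance f ->
    exists h, orientation h /\ EFX f h.

Definition bipartite (V : finType) (adj : rel V) : Prop :=
  exists side : V -> bool, forall u v, adj u v -> side u != side v.

From mathcomp Require Import all_boot all_order all_algebra.
From mathcomp Require Import reals.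
Import Order.TTheory GRing.Theory Num.Theory.
Local Open Scope ring_scope.
Set Implicit Arguments. Unset Strict Implicit.

(* Let every vertex of the left side pick a favourite incident edge, i.e. one
   of maximal value as a singleton, and orient that edge towards it; orient
   every other edge towards its right endpoint.  A left vertex then owns at
   most one edge, so nobody can envy it after removing one.  Two distinct
   vertices share at most one edge e, and by locality u values the bundle of v
   minus one edge at most f_u({e}).  If u envies a right vertex v this way,
   then u is a left vertex and e is not its favourite, so f_u({e}) is at most
   the value of u's favourite, which u owns. *)

Section Edges.
Variables (V : finType) (adj : rel V).

Lemma edge_set2 (e : edge adj) u v :
  u != v -> u \in val e -> v \in val e -> val e = [set u; v].
Proof.
have /existsP[x /existsP[y /andP[_ /eqP ->]]] := valP e.
move=> nuv /set2P[] eu /set2P[] ev; subst u v; rewrite ?eqxx // in nuv.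
exact: setUC.
Qed.

Lemma edge_ends_inj (e1 e2 : edge adj) u v : u != v ->
  u \in val e1 -> v \in val e1 -> u \in val e2 -> v \in val e2 -> e1 = e2.
Proof.
move=> nuv u1 v1 u2 v2; apply: val_inj.
by rewrite (edge_set2 nuv u1 v1) (edge_set2 nuv u2 v2).
Qed.

End Edges.

Section BipartiteOrientation.
Variables (V : finType) (adj : rel V) (side : V -> bool).
Hypothesis side_adj : forall u v, adj u v -> side u != side v.

Lemma edge_sides (e : edge adj) :
  exists a b, [/\ side a, ~~ side b & val e = [set a; b]].
Proof.
have /existsP[x /existsP[y /andP[axy /eqP E]]] := valP e.
have := side_adj axy; case sx: (side x); case sy: (side y) => // _.
  by exists x, y; rewrite sy E.
by exists y, x; rewrite sx E setUC.
Qed.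

Lemma edge_sides_neq (e : edge adj) u v :
  u != v -> u \in val e -> v \in val e -> side u != side v.
Proof.
move=> nuv ue ve; have [a [b [sa sb E]]] := edge_sides e.
move: ue ve; rewrite E => /set2P[] eu /set2P[] ev; subst u v;
  by rewrite ?eqxx // in nuv; rewrite sa (negbTE sb).
Qed.

Variables (R : realType) (f : V -> {set edge adj} -> R).
Hypothesis f_mono : forall v (A B : {set edge adj}), A \subset B -> f v A <= f v B.
Hypothesis f_local : forall v X, f v X = f v (X :&: inc_edges adj v).

Definition favourite (u : V) : option (edge adj) :=
  [pick e : edge adj | (u \in val e) &&
     [forall e' : edge adj, (u \in val e') ==> (f u [set e'] <= f u [set e])]].

Lemma favouriteP u (e : edge adj) : u \in val e ->
  exists e', [/\ favourite u = Some e', u \in val e' &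
    forall e'' : edge adj, u \in val e'' -> f u [set e''] <= f u [set e']].
Proof.
move=> ue; rewrite /favourite; case: pickP => [e' /andP[ue' /forallP max_e']|].
  by exists e'; split=> // e''; apply/implyP/max_e'.
have [m um max_m] := @arg_maxP _ R _ e (fun e0 : edge adj => u \in val e0)
  (fun e0 => f u [set e0]) ue.
move=> /(_ m); rewrite um /=; move/negP; case.
by apply/forallP => e''; apply/implyP; exact: max_m.
Qed.

Lemma favourite_in u (e : edge adj) : favourite u = Some e -> u \in val e.
Proof. by rewrite /favourite; case: pickP => // e' /andP[ue' _] [<-]. Qed.

Definition favoured (e : edge adj) : bool :=
  [exists a in val e, side a && (favourite a == Some e)].

Definition some_end (e : edge adj) : V := xchoose (existsP (valP e)).

(* The fallback [some_end e] is never used: some endpoint has side [favoured e]. *)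
Definition orient (e : edge adj) : V :=
  odflt (some_end e) [pick x in val e | side x == favoured e].

Lemma orient_set2 (e : edge adj) a b : side a -> ~~ side b -> val e = [set a; b] ->
  orient e = if favourite a == Some e then a else b.
Proof.
move=> sa sb E.
have favoured_e : favoured e = (favourite a == Some e).
  apply/existsP/idP => [[a' /and3P[]]|fav_a]; last by exists a; rewrite E set21 sa.
  by rewrite E => /set2P[]->; rewrite ?(negbTE sb).
rewrite /orient favoured_e; case: pickP => [x /andP[]|].
  by rewrite E => /set2P[]->; rewrite ?sa ?(negbTE sb); case: (favourite a == Some e).
move=> /(_ (if favourite a == Some e then a else b)).
by case: eqP; rewrite /= E ?set21 ?set22 ?sa ?(negbTE sb).
Qed.

Lemma orient_in (e : edge adj) : orient e \in val e.
Proof.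
have [a [b [sa sb E]]] := edge_sides e.
by rewrite (orient_set2 sa sb E) E; case: ifP; rewrite ?set21 ?set22.
Qed.

Lemma orient_left (e : edge adj) : side (orient e) -> favourite (orient e) = Some e.
Proof.
have [a [b [sa sb E]]] := edge_sides e.
by rewrite (orient_set2 sa sb E); case: eqP => // _; rewrite (negbTE sb).
Qed.

Lemma orient_favourite u (e : edge adj) : side u -> favourite u = Some e -> orient e = u.
Proof.
move=> su fav_u; have [a [b [sa sb E]]] := edge_sides e.
move: (favourite_in fav_u); rewrite E => /set2P[] eq_u.
  2: by move: sb; rewrite -eq_u su.
by rewrite (orient_set2 sa sb E) -eq_u fav_u eqxx.
Qed.

Lemma envy_shared_edge u (e g : edge adj) :
  u \in val e -> u != orient e -> orient g = orient e -> g != e ->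
  f u [set e] <= f u (bundle orient u).
Proof.
move=> ue nue oge nge; have ve := orient_in e.
have [sv|sv] := boolP (side (orient e)).
  have := orient_left sv; rewrite -{1}oge orient_left ?oge // => -[ge].
  by rewrite ge eqxx in nge.
have su : side u.
  by move: (edge_sides_neq nue ue ve); rewrite (negbTE sv); case: (side u).
have [e' [fav_u _ max_e']] := favouriteP ue.
apply: le_trans (max_e' _ ue) (f_mono _ _).
by rewrite sub1set inE (orient_favourite su fav_u).
Qed.

Lemma orient_EFX : EFX f orient.
Proof.
move=> u v g; rewrite inE => /eqP ogv.
have [<-|nuv] := eqVneq u v; first by apply: f_mono; exact: subD1set.
rewrite f_local; set S := _ :&: _.
have [->|[e eS]] := set_0Vmem S; first by apply: f_mono; exact: sub0set.
move: eS; rewrite !inE => /andP[/andP[neg /eqP oev] ue].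
have S_sub : S \subset [set e].
  apply/subsetP => e2; rewrite !inE => /andP[/andP[_ /eqP oe2v] ue2].
  apply/eqP/(edge_ends_inj nuv ue2 _ ue); [rewrite -oe2v | rewrite -oev]; exact: orient_in.
apply: le_trans (f_mono _ S_sub) (envy_shared_edge (g := g) ue _ _ _).
- by rewrite oev.
- by rewrite ogv oev.
- by rewrite eq_sym.
Qed.

End BipartiteOrientation.

Theorem mainTheorem6 (V : finType) (adj : rel V) :
  simple_graph adj -> bipartite adj -> strongly_EFX_orientable adj.
Proof.
move=> _ [side side_adj] R f [_ [f_mono f_local]].
exists (orient side f); split; first exact: orient_in.
exact: orient_EFX.
Qed.
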